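(* Let $X$ be a fibrewise space over $B$ such that $X$ is fibrewise Hausdorff and $X\times_BX$ is perfectly normal. Then $X$ is fibrewise locally equiconnected if and only if $X$ is fibrewise uniformly locally contractible.
   Context: A fibrewise space over $B$ is a space $X$ with $p_X:X\to B$; fibrewise homotopies $G:W\times I\to X$ satisfy $p_X(G(w,t))=p_W(w)$. $X\times_BX=\{(x,y):p_X(x)=p_X(y)\}$ and $\Delta_X(x)=(x,x)$. $X$ is fibrewise Hausdorff if $\Delta_X(X)$ is closed in $X\times_BX$. A fibrewise cofibration is a fibrewise map with the homotopy extension property with respect to fibrewise maps and fibrewise homotopies; closed if also a closed embedding. $X$ is fibrewise locally equiconnected if $\Delta_X$ is a closed fibrewise cofibration. $X$ is fibrewise uniformly locally contractible if there are an open neighbourhood $W$ of $\Delta_X(X)$ in $X\times_BX$ and a fibrewise homotopy $G:W\times I\to X$ with $G(x,y,0)=x$, $G(x,y,1)=y$ for $(x,y)\in W$ and $G(x,x,t)=x$ for all $x\in X,t\in I$. *)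

From HB Require Import structures.
From mathcomp Require Import all_boot all_order all_algebra.
From mathcomp Require Import all_classical all_reals.
From mathcomp Require Import all_analysis borel_hierarchy.
Set Implicit Arguments. Unset Strict Implicit. Unset Printing Implicit Defensive.
Import Order.TTheory GRing.Theory Num.Theory.
Import numFieldNormedType.Exports.
Local Open Scope classical_set_scope.
Local Open Scope ring_scope.

Definition unitI (R : realType) : set R := [set t | 0 <= t <= 1].
Arguments unitI R : clear implicits.

(* A fibrewise space over B: a topological space X with a continuous
   projection p : X -> B (the hypothesis "continuous p" is added in the
   theorem).  Fibrewise product X x_B X, with the subspace topology of
   X * X (MathComp-Analysis' [set_type] carries the genuine subspace
   (initial) topology). *)
Definition fibprod_set {B X : topologicalType} (p : X -> B) : set (X * X) :=
  [set z | p z.1 = p z.2].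

Definition fibprod {B X : topologicalType} (p : X -> B) : topologicalType :=
  set_type (fibprod_set p).

Definition fibprod_proj {B X : topologicalType} (p : X -> B)
  (z : fibprod p) : B := p (sval z).1.
Arguments fibprod_proj {B X} p z.

Definition fdiag {B X : topologicalType} (p : X -> B) (x : X) : fibprod p :=
  exist _ (x, x) (mem_set (erefl (p x))).

Definition fw_hausdorff {B X : topologicalType} (p : X -> B) : Prop :=
  closed (range (fdiag p)).

Definition perfectly_normal (T : topologicalType) : Prop :=
  normal_space T /\ (forall C : set T, closed C -> Gdelta C).

Definition closed_embedding {A Y : topologicalType} (u : A -> Y) : Prop :=
  [/\ continuous u, closed (range u) &
      exists g : Y -> A, {within range u, continuous g} /\ cancel u g].

(* Homotopies W x I -> E are
   represented as curried maps W -> R -> E continuous on W x [0,1]. *)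
Definition fw_cofibration (R : realType) {B A Y : topologicalType}
  (pA : A -> B) (pY : Y -> B) (u : A -> Y) : Prop :=
  [/\ continuous u, (forall a, pY (u a) = pA a) &
  forall (E : topologicalType) (pE : E -> B), continuous pE ->
  forall (f : Y -> E) (h : A -> R -> E),
    continuous f -> (forall y, pE (f y) = pY y) ->
    {within [set: A] `*` unitI R, continuous (fun z : A * R => h z.1 z.2)} ->
    (forall a t, unitI R t -> pE (h a t) = pA a) ->
    (forall a, h a 0 = f (u a)) ->
    exists H : Y -> R -> E,
      [/\ {within [set: Y] `*` unitI R, continuous (fun z : Y * R => H z.1 z.2)},
          (forall y t, unitI R t -> pE (H y t) = pY y),
          (forall y, H y 0 = f y) &
          (forall a t, unitI R t -> H (u a) t = h a t)]].

Definition closed_fw_cofibration (R : realType) {B A Y : topologicalType}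
  (pA : A -> B) (pY : Y -> B) (u : A -> Y) : Prop :=
  fw_cofibration R pA pY u /\ closed_embedding u.

Definition fw_LEC (R : realType) {B X : topologicalType} (p : X -> B) : Prop :=
  closed_fw_cofibration R p (fibprod_proj p) (fdiag p).

Definition fw_ULC (R : realType) {B X : topologicalType} (p : X -> B) : Prop :=
  exists W : set (fibprod p),
    [/\ open W, range (fdiag p) `<=` W &
    exists G : fibprod p -> R -> X,
      [/\ {within W `*` unitI R, continuous (fun z : fibprod p * R => G z.1 z.2)},
          (forall w t, W w -> unitI R t -> p (G w t) = fibprod_proj p w),
          (forall w, W w -> G w 0 = (sval w).1 /\ G w 1 = (sval w).2) &
          (forall x t, unitI R t -> G (fdiag p x) t = x)]].

From mathcomp Require Import all_boot all_order all_algebra.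
From mathcomp Require Import all_classical all_reals.
From mathcomp Require Import all_analysis borel_hierarchy.
From mathcomp Require Import lra.
Set Implicit Arguments. Unset Strict Implicit. Unset Printing Implicit Defensive.
Import Order.TTheory GRing.Theory Num.Theory.
Import numFieldNormedType.Exports.
Local Open Scope classical_set_scope.
Local Open Scope ring_scope.

(* Write Y = X x_B X.

   LEC => ULC.  The homotopy extension property of the diagonal Delta,
   applied to the inclusion of Y as Y x {0} into S = Y x {0} u Delta(X) x I,
   gives a fibrewise H : Y x I -> S with H(Delta x, t) = (Delta x, t).
   W = {w | H(w,1) has positive time} is an open neighbourhood of Delta(X)
   on which H(w,1) lies over Delta(X); the contraction of w = (x, y) runs
   from x along the first coordinates of H(w, -) and back to y along the
   second ones.
   ULC => LEC.  Delta is a closed embedding since X is fibrewise Hausdorff.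
   Urysohn gives u : Y -> I, 0 on Delta(X) and 1 off W; perfect normality
   makes Delta(X) the zero set of some phi0 : Y -> I.  With them G yields a
   fibrewise deformation of Y fixing Delta(X), and the homotopy extension
   is Strom's formula: run f along the deformation, then the given homotopy. *)

(* Subspaces [set_type A] carry the initial topology of the inclusion. *)
Lemma sval_continuous {T : topologicalType} (A : set T) :
  continuous (fun z : A => sval z).
Proof. by have := @initial_continuous A T set_val; rewrite set_valE. Qed.

Lemma continuous_into_subspace {T U : topologicalType} (A : set U) (k : T -> A) :
  continuous (fun x => sval (k x)) -> continuous k.
Proof. by move=> kc; apply: (@continuous_comp_initial A T U set_val); rewrite set_valE. Qed.

Section ContinuityCombinators.
Context {T U V : topologicalType}.

Lemma continuous_fst : continuous (@fst T U).
Proof. by move=> x; exact: cvg_fst. Qed.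

Lemma continuous_snd : continuous (@snd T U).
Proof. by move=> x; exact: cvg_snd. Qed.

Lemma continuous_compose (f : T -> U) (g : U -> V) :
  continuous f -> continuous g -> continuous (fun x => g (f x)).
Proof. by move=> fc gc x; apply: continuous_comp; [exact: fc | exact: gc]. Qed.

Lemma continuous_pair (f : T -> U) (g : T -> V) :
  continuous f -> continuous g -> continuous (fun x => (f x, g x)).
Proof. by move=> fc gc x; apply: cvg_pair; [exact: fc | exact: gc]. Qed.
Lemma continuous_within_comp (A : set T) (f : T -> U) (g : U -> V) :
  {within A, continuous f} -> continuous g -> {within A, continuous (fun x => g (f x))}.
Proof. by move=> fc gc x; apply: continuous_comp; [exact: fc | exact: gc]. Qed.
End ContinuityCombinators.

Section RealContinuity.
Context {T : topologicalType} {R : realType}.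
Implicit Types f g : T -> R.

Lemma continuous_cst_real (c : R) : continuous (fun _ : T => c).
Proof. by move=> x; exact: cvg_cst. Qed.

Lemma continuous_addr f g : continuous f -> continuous g -> continuous (fun x => f x + g x).
Proof. by move=> fc gc x; apply: cvgD; [exact: fc | exact: gc]. Qed.

Lemma continuous_subr f g : continuous f -> continuous g -> continuous (fun x => f x - g x).
Proof. by move=> fc gc x; apply: cvgB; [exact: fc | exact: gc]. Qed.

Lemma continuous_mulr f g : continuous f -> continuous g -> continuous (fun x => f x * g x).
Proof. by move=> fc gc x; apply: cvgM; [exact: fc | exact: gc]. Qed.

Lemma continuous_minr f g : continuous f -> continuous g ->
  continuous (fun x => Num.min (f x) (g x)).
Proof. by move=> fc gc x; apply: (@continuous_min R T f g); [exact: fc | exact: gc]. Qed.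
End RealContinuity.
Arguments continuous_cst_real {T R} c.

(* Clamping R onto I = [0,1]: it lets maps that are only meaningful on
   I be defined (and continuous) on the whole real line. *)
Section Clamp.
Context {R : realType}.

Lemma unitI0 : unitI R 0. Proof. by rewrite /unitI /= lexx ler01. Qed.
Lemma unitI1 : unitI R 1. Proof. by rewrite /unitI /= lexx ler01. Qed.

Lemma unitI_mul (a b : R) : unitI R a -> unitI R b -> unitI R (a * b).
Proof. by move=> /andP[a0 a1] /andP[b0 b1]; rewrite /unitI /= mulr_ge0 ?mulr_ile1. Qed.

Definition clamp (t : R) : R := Num.max 0 (Num.min 1 t).

Lemma clamp_in t : unitI R (clamp t).
Proof. by rewrite /unitI /clamp /= le_max lexx ge_max ler01 ge_min lexx ?orbT. Qed.

Lemma clamp_id t : unitI R t -> clamp t = t.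
Proof. by move=> /andP[t0 t1]; rewrite /clamp (min_idPr t1) (max_idPr t0). Qed.

Lemma clamp_continuous : continuous clamp.
Proof.
move=> x; apply: (@continuous_max R R (fun=> 0) (fun t => Num.min 1 t)).
  exact: cvg_cst.
by apply: (@continuous_min R R (fun=> 1) id); [exact: cvg_cst | exact: cvg_id].
Qed.
End Clamp.

Section Pasting.
Context {T : Type} {V : topologicalType} (F : set_system T) {FF : Filter F}.

Lemma cvg_within_eventually_empty (P : set T) (g : T -> V) (l : V) :
  (\forall x \near F, ~ P x) -> g @ within P F --> l.
Proof.
move=> nP N _; suff : \forall x \near F, P x -> N (g x) by [].
by apply: filterS nP => x nPx /nPx.
Qed.

Lemma cvg_comp_within {U : topologicalType} (A : set U) (k : T -> U) (g : U -> V) (u0 : U) :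
  k @ F --> u0 -> (\forall x \near F, A (k x)) ->
  g @ within A (nbhs u0) --> g u0 -> (fun x => g (k x)) @ F --> g u0.
Proof.
move=> kF AF gA N /gA; rewrite /within /= nbhs_simpl => /kF /= kN.
by rewrite nbhs_simpl; apply: filterS2 AF kN => x Ax; exact.
Qed.

(* Pasting lemma for a map defined by cases on a <= b: each branch need only
   converge to l on its own region, and only when that region can reach the
   limit point (a0 <= b0, resp. b0 <= a0); the other region is then
   eventually empty. *)
Lemma cvg_paste_le {R : realType} (a b : T -> R) (a0 b0 : R) (g1 g2 : T -> V) (l : V) :
  a @ F --> a0 -> b @ F --> b0 ->
  (a0 <= b0 -> g1 @ within [set x | a x <= b x] F --> l) ->
  (b0 <= a0 -> g2 @ within [set x | b x < a x] F --> l) ->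
  (fun x => if a x <= b x then g1 x else g2 x) @ F --> l.
Proof.
move=> aF bF c1 c2.
have dF : (fun x => b x - a x) @ F --> b0 - a0 by apply: cvgB.
have {}c1 : g1 @ within [set x | a x <= b x] F --> l.
  have [ab|ba] := leP a0 b0; first exact: c1.
  have ev : \forall x \near F, b x - a x < 0 by apply: (cvgr_lt _ dF 0) => //; rewrite subr_lt0.
  apply: cvg_within_eventually_empty; apply: filterS ev => x /=.
  by rewrite subr_lt0 => /lt_geF ->.
have {}c2 : g2 @ within [set x | b x < a x] F --> l.
  have [ba|ab] := leP b0 a0; first exact: c2.
  have ev : \forall x \near F, 0 < b x - a x by apply: (cvgr_gt _ dF 0) => //; rewrite subr_gt0.
  apply: cvg_within_eventually_empty; apply: filterS ev => x /=.
  by rewrite subr_gt0 => /lt_gtF ->.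
move=> N Nl.
have n1 : \forall x \near F, a x <= b x -> N (g1 x) := c1 N Nl.
have n2 : \forall x \near F, b x < a x -> N (g2 x) := c2 N Nl.
by apply: filterS2 n1 n2 => x /= h1 h2; case: leP => [/h1|/h2].
Qed.
End Pasting.

(* Filters [within P (within S (nbhs w0))] arise when one branch P of a
   piecewise map is tested on a subspace S. *)
Lemma cvg_within_within {U : topologicalType} (S P : set U) (w0 : U) :
  within P (within S (nbhs w0)) --> w0.
Proof. exact: cvg_trans (cvg_within _) (cvg_within _). Qed.
Arguments cvg_within_within {U} S P w0.

Lemma cvg_comp_within_region {U V W : topologicalType} (A : set U) (g : U -> V)
    (k : W -> U) (S P : set W) (w0 : W) :
  continuous k -> (forall w, S w -> P w -> A (k w)) -> A (k w0) ->
  {within A, continuous g} ->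
  (fun w => g (k w)) @ within P (within S (nbhs w0)) --> g (k w0).
Proof.
move=> kc kA kw0 /subspace_continuousP gc.
apply: (cvg_comp_within (A := A)); last exact: gc.
  apply: cvg_trans (kc w0); apply: cvg_app; exact: cvg_within_within.
suff : \forall w \near nbhs w0, S w -> P w -> A (k w) by [].
by apply: nearW => w; exact: kA.
Qed.

(* Tube lemma along I: if k is continuous on Y x R and constantly v on
   {y0} x I, then k maps some tube U x I into any neighbourhood of v. *)
Lemma tube_const {R : realType} {Y V : topologicalType} (k : Y -> R -> V) (y0 : Y) (v : V) :
  continuous (fun z : Y * R => k z.1 z.2) -> (forall s, k y0 s = v) ->
  forall N, nbhs v N -> \forall y \near y0, forall s, unitI R s -> N (k y s).
Proof.
move=> kc kv N Nv.
have kc' : continuous (fun z : R * Y => k z.2 z.1).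
  exact: (continuous_compose (continuous_pair continuous_snd continuous_fst) kc).
have tube : \forall y \near y0, `[0, 1] `<=` (fun s => N (k y s)).
  apply: ((compact_near_coveringP _).1 (@segment_compact R 0 1) Y (nbhs y0)
    (fun y s => N (k y s))) => s _.
  by have := kc' (s, y0) N; rewrite /= kv; exact.
apply: filterS tube => y yN s /andP[s0 s1]; apply: yN.
by rewrite /= in_itv /= s0 s1.
Qed.

Lemma cvg_pair_pt {T : Type} {U V : topologicalType} (F : set_system T) {FF : Filter F}
    (f : T -> U) (g : T -> V) (a : U) (b : V) :
  f @ F --> a -> g @ F --> b -> (fun x => (f x, g x)) @ F --> (a, b).
Proof. by move=> fa gb; apply: cvg_pair. Qed.

Lemma cvg_comp_continuous {T : Type} {U V : topologicalType} (F : set_system T)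
    (k : T -> U) (g : U -> V) (l : U) :
  k @ F --> l -> continuous g -> (fun x => g (k x)) @ F --> g l.
Proof. by move=> kl gc; apply: cvg_comp kl (gc l). Qed.

Lemma cvg_near_eq {T : Type} {V : topologicalType} (F : set_system T) {FF : Filter F}
    (f g : T -> V) (l : V) :
  (\forall x \near F, f x = g x) -> g @ F --> l -> f @ F --> l.
Proof. by move=> fg; apply: cvg_trans; apply: near_eq_cvg; apply: filterS fg. Qed.

Lemma reverse_concat_continuous {R : realType} {T V : topologicalType}
    (A : set T) (K1 K2 : T -> R -> V) :
  {within A `*` unitI R, continuous (fun z : T * R => K1 z.1 z.2)} ->
  {within A `*` unitI R, continuous (fun z : T * R => K2 z.1 z.2)} ->
  (forall z, A z -> K1 z 1 = K2 z 1) ->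
  {within A `*` unitI R, continuous (fun z : T * R =>
     if z.2 <= 2^-1 then K1 z.1 (2 * z.2) else K2 z.1 (2 - 2 * z.2))}.
Proof.
move=> K1c K2c K12; apply/subspace_continuousP => -[z0 t0] [/= Az0 /andP[t00 t01]].
have tF : snd @ within (A `*` unitI R) (nbhs (z0, t0)) --> t0.
  exact: cvg_trans (cvg_app snd (cvg_within _)) cvg_snd.
rewrite /from_subspace /=.
apply: (cvg_paste_le (a := snd) (b := fun=> 2^-1) tF (cvg_cst _)) => [tle|tge].
- rewrite ifT //.
  apply: (@cvg_comp_within_region _ _ _ (A `*` unitI R) (fun z : T * R => K1 z.1 z.2)
    (fun z : T * R => (z.1, 2 * z.2))).
  + apply: (continuous_pair (f := fst) (g := fun z : T * R => 2 * z.2) continuous_fst).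
    by move=> z; apply: cvgM; [exact: cvg_cst | exact: cvg_snd].
  + move=> [z t] [Az /= /andP[t0z _]] /= tle'; split => //.
    by rewrite /unitI /=; apply/andP; split; lra.
  + by split => //; rewrite /unitI /=; apply/andP; split; lra.
  + exact: K1c.
- have -> : (if t0 <= 2^-1 then K1 z0 (2 * t0) else K2 z0 (2 - 2 * t0)) = K2 z0 (2 - 2 * t0).
    case: ifP => // tle; have -> : t0 = 2^-1 by apply/eqP; rewrite eq_le tle tge.
    by rewrite mulfV ?pnatr_eq0 // K12 // -[X in X - 1]/(1 + 1) addrK.
  apply: (@cvg_comp_within_region _ _ _ (A `*` unitI R) (fun z : T * R => K2 z.1 z.2)
    (fun z : T * R => (z.1, 2 - 2 * z.2))).
  + apply: (continuous_pair (f := fst) (g := fun z : T * R => 2 - 2 * z.2) continuous_fst).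
    by move=> z; apply: cvgB; [exact: cvg_cst | apply: cvgM; [exact: cvg_cst | exact: cvg_snd]].
  + move=> [z t] [Az /= /andP[_ t1z]] /= tgt; split => //.
    by rewrite /unitI /=; apply/andP; split; lra.
  + by split => //; rewrite /unitI /=; apply/andP; split; lra.
  + exact: K2c.
Qed.

(* In a normal space every closed G_delta set C is an exact zero set: with
   Urysohn functions g_i : T -> [0,1] vanishing on C and equal to 1 off the
   i-th open set of the G_delta presentation, the uniformly convergent sum
   sum_i 2^-(i+1) g_i vanishes exactly on C. *)
Section ZeroSet.
Local Unset Implicit Arguments.
Variables (T : topologicalType) (R : realType) (C : set T) (g : nat -> T -> R).
Hypothesis g_continuous : forall i, continuous (g i).
Hypothesis g_range : forall i z, 0 <= g i z <= 1.
Hypothesis g_zero : forall i z, C z -> g i z = 0.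
Hypothesis g_one : forall z, ~ C z -> exists i, g i z = 1.

Definition weight (n : nat) : R := 2^-1 ^+ n.
Definition wpsum (N : nat) (z : T) : R := \sum_(i < N) weight i.+1 * g i z.
Definition wsum (z : T) : R := limn (fun N => wpsum N z).

Let weight_gt0 n : 0 < weight n.
Proof. by apply: exprn_gt0; rewrite invr_gt0 ltr0n. Qed.

Let weight0 : weight 0 = 1.
Proof. exact: expr0. Qed.

Let wpsumS N z : wpsum N.+1 z = wpsum N z + weight N.+1 * g N z.
Proof. by rewrite /wpsum big_ord_recr. Qed.

Let wpsum0 z : wpsum 0 z = 0.
Proof. by rewrite /wpsum big_ord0. Qed.

Let wpsum_tail z N k : wpsum (N + k) z <= wpsum N z + weight N - weight (N + k).
Proof.
elim: k => [|k IH]; first by rewrite addn0; lra.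
rewrite addnS wpsumS; have /andP[_ g1] := g_range (N + k) z.
have wS : weight (N + k).+1 = 2^-1 * weight (N + k) by rewrite /weight exprS.
have : weight (N + k).+1 * g (N + k) z <= weight (N + k).+1.
  by rewrite -[leRHS]mulr1 ler_wpM2l // ltW.
have := weight_gt0 (N + k); rewrite wS; lra.
Qed.

Let wpsum_nondecreasing z : nondecreasing_seq (fun N => wpsum N z).
Proof.
apply/nondecreasing_seqP => n; rewrite wpsumS lerDl.
by apply: mulr_ge0; [exact: ltW | case/andP: (g_range n z)].
Qed.

Let wpsum_cvg z : cvgn (fun N => wpsum N z).
Proof.
apply: nondecreasing_is_cvgn; first exact: wpsum_nondecreasing.
exists 1 => _ [n _ <-] /=; have := wpsum_tail z 0 n.
by rewrite add0n wpsum0 weight0; have := weight_gt0 n; lra.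
Qed.

Let wsum_ge z N : wpsum N z <= wsum z.
Proof. exact: (nondecreasing_cvgn_le (wpsum_nondecreasing z) (wpsum_cvg z) N). Qed.

Let wsum_le z N : wsum z <= wpsum N z + weight N.
Proof.
apply: limr_le; first exact: wpsum_cvg.
exists N => // n /= Nn; have := wpsum_tail z N (n - N); rewrite subnKC //.
have := weight_gt0 n; lra.
Qed.

Let wsum_zero z : wsum z = 0 <-> C z.
Proof.
split=> [wz0|Cz]; last first.
  rewrite /wsum (_ : (fun N => wpsum N z) = fun=> 0) ?lim_cst //.
  by apply: funext => N; rewrite /wpsum big1 // => i _; rewrite g_zero ?mulr0.
apply: contrapT => nCz; have [i gi] := g_one z nCz.
have := wsum_ge z i.+1; rewrite wpsumS gi mulr1 wz0.
have := wpsum_nondecreasing z 0%N i (leq0n i); rewrite wpsum0.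
have := weight_gt0 i.+1; lra.
Qed.

Let wsum_range z : 0 <= wsum z <= 1.
Proof.
have := wsum_ge z 0; have := wsum_le z 0; rewrite wpsum0 weight0.
by move=> *; apply/andP; split; lra.
Qed.

Let wpsum_continuous N : continuous (wpsum N).
Proof.
elim: N => [|N IH].
  rewrite (_ : wpsum 0 = fun=> 0); first exact: continuous_cst_real.
  by apply: funext => z; rewrite wpsum0.
rewrite (_ : wpsum N.+1 = fun z => wpsum N z + weight N.+1 * g N z); last first.
  by apply: funext => z; rewrite wpsumS.
by move=> z; apply: cvgD; [exact: IH | apply: cvgM; [exact: cvg_cst | exact: g_continuous]].
Qed.

(* Continuity: wsum is within weight N of the continuous partial sum wpsum N. *)
Let wsum_continuous : continuous wsum.
Proof.
move=> z0; apply/cvgrPdist_lt => e e0.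
have e3 : 0 < e / 3 by rewrite divr_gt0.
have [N _ weightN] : \forall n \near \oo, weight n < e / 3.
  apply: (cvgr_lt _ (@cvg_expr R 2^-1 _)) => //.
  by rewrite ger0_norm ?invr_ge0 ?ler0n // invf_lt1 // ltr1n.
have {weightN} weightN := weightN N (leqnn N).
move/cvgrPdist_lt/(_ (e / 3) e3): (wpsum_continuous N z0); apply: filterS => z.
have := wsum_ge z0 N; have := wsum_le z0 N; have := wsum_ge z N; have := wsum_le z N.
rewrite !ltr_norml => *; apply/andP; split; lra.
Qed.

Lemma zero_set_of_sum : exists f : T -> R,
  [/\ continuous f, forall z, f z = 0 <-> C z & forall z, 0 <= f z <= 1].
Proof. by exists wsum; split; [exact: wsum_continuous | exact: wsum_zero | exact: wsum_range]. Qed.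
End ZeroSet.

Lemma closed_Gdelta_zero_set (T : topologicalType) (R : realType) (C : set T) :
  normal_space T -> closed C -> Gdelta C ->
  exists f : T -> R, [/\ continuous f, forall z, f z = 0 <-> C z &
    forall z, 0 <= f z <= 1].
Proof.
move=> nT cC [U Uo CU].
have CUi i z : C z -> U i z by rewrite CU; apply.
have urysohn i : exists gi : T -> R, [/\ continuous gi, gi @` C `<=` [set 0],
    gi @` (~` U i) `<=` [set 1] & range gi `<=` `[0, 1]].
  apply: (urysohn_ext_itv nT cC (open_closedC (Uo i)) _ (@ltr01 R)).
  by apply/seteqP; split => // z [Cz nUz]; apply/nUz/CUi.
have [g gP] := choice urysohn.
apply: (@zero_set_of_sum T R C g) => [i|i z|i z Cz|z nCz].
- by case: (gP i).
- by case: (gP i) => _ _ _ /(_ (g i z) (ex_intro2 _ _ z I erefl)); rewrite /= in_itv.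
- by case: (gP i) => _ /(_ _ (ex_intro2 _ _ z Cz erefl)).
- have [i nUi] : exists i, ~ U i z.
    apply: contrapT => allU; apply: nCz; rewrite CU => i _.
    by apply: contrapT => nUi; apply: allU; exists i.
  by exists i; case: (gP i) => _ _ /(_ _ (ex_intro2 _ _ z nUi erefl)).
Qed.

Section FibreProduct.
Variables (B X : topologicalType) (p : X -> B).

Lemma fibprod_eq (z : fibprod p) : p (sval z).1 = p (sval z).2.
Proof. exact: (set_mem (svalP z)). Qed.

Lemma fdiag_continuous : continuous (fdiag p).
Proof. by apply: continuous_into_subspace => x; apply: cvg_pair; exact: cvg_id. Qed.

Lemma fst_fibprod_continuous : continuous (fun z : fibprod p => (sval z).1).
Proof. exact: continuous_compose (@sval_continuous _ (fibprod_set p)) continuous_fst. Qed.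

Lemma snd_fibprod_continuous : continuous (fun z : fibprod p => (sval z).2).
Proof. exact: continuous_compose (@sval_continuous _ (fibprod_set p)) continuous_snd. Qed.

Lemma fibprod_proj_continuous : continuous p -> continuous (fibprod_proj p).
Proof. move=> pc; exact (continuous_compose fst_fibprod_continuous pc). Qed.
End FibreProduct.

(* The homotopy extension property of
   the diagonal, applied to the inclusion of Y = X x_B X as Y x {0} into the
   subspace S = Y x {0} u Delta(X) x I of Y x R, yields a fibrewise map
   H : Y x I -> S extending (x, t) |-> (Delta x, t). *)
Section LecToUlc.
Variables (R : realType) (B X : topologicalType) (p : X -> B).
Hypothesis p_continuous : continuous p.
Local Notation Y := (fibprod p).

Definition cyl_set : set (Y * R) :=
  [set e | e.2 = 0 \/ (range (fdiag p) e.1 /\ unitI R e.2)].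

Definition cyl_proj (e : cyl_set) : B := fibprod_proj p (sval e).1.

Lemma cyl_base_mem (y : Y) : (y, 0) \in cyl_set.
Proof. by apply: mem_set; left. Qed.

Lemma cyl_diag_mem (x : X) (t : R) : (fdiag p x, clamp t) \in cyl_set.
Proof. by apply: mem_set; right; split; [exists x | exact: clamp_in]. Qed.

Definition cyl_base (y : Y) : cyl_set := exist _ (y, 0) (cyl_base_mem y).

(* The homotopy to be extended; time is clamped so that it is total. *)
Definition cyl_diag (x : X) (t : R) : cyl_set :=
  exist _ (fdiag p x, clamp t) (cyl_diag_mem x t).

Lemma cyl_diag_of_pos (e : cyl_set) :
  0 < (sval e).2 -> (sval (sval e).1).1 = (sval (sval e).1).2.
Proof.
case: (set_valP e) => [-> |[[x _ <-] _]] //; by rewrite ltxx.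
Qed.

Lemma cyl_retraction : fw_cofibration R p (fibprod_proj p) (fdiag p) ->
  exists H : Y -> R -> cyl_set,
    [/\ {within [set: Y] `*` unitI R, continuous (fun z : Y * R => H z.1 z.2)},
        (forall y t, unitI R t -> cyl_proj (H y t) = fibprod_proj p y),
        (forall y, H y 0 = cyl_base y) &
        (forall x t, unitI R t -> H (fdiag p x) t = cyl_diag x t)].
Proof.
case=> _ _ hep; apply: hep => [|||y|x t _|x].
- exact (continuous_compose (continuous_compose (@sval_continuous _ cyl_set) continuous_fst)
    (fibprod_proj_continuous p_continuous)).
- apply: continuous_into_subspace.
  exact (continuous_pair (fun y : Y => @cvg_id _ (nbhs y)) (@continuous_cst_real Y R 0)).
- done.
- apply: continuous_subspaceT; apply: continuous_into_subspace.
  exact (continuous_pair (continuous_compose continuous_fst (@fdiag_continuous _ _ p))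
    (continuous_compose continuous_snd clamp_continuous)).
- done.
- by apply: val_inj; rewrite /= clamp_id //; exact: unitI0.
Qed.

(* Given the retraction H, the set W where H has left Y x {0} by time 1 is
   an open neighbourhood of the diagonal, and for w in W the point H(w,1)
   lies over the diagonal; so the contraction of w = (x, y) runs from x along
   the first coordinates of H(w, -) and returns to y along the second ones. *)
Section Retraction.
Variable H : Y -> R -> cyl_set.
Hypothesis H_continuous :
  {within [set: Y] `*` unitI R, continuous (fun z : Y * R => H z.1 z.2)}.
Hypothesis H_fibre : forall y t, unitI R t -> cyl_proj (H y t) = fibprod_proj p y.
Hypothesis H_start : forall y, H y 0 = cyl_base y.
Hypothesis H_diag : forall x t, unitI R t -> H (fdiag p x) t = cyl_diag x t.

Definition ret_path (w : Y) (s : R) : X * X := sval (sval (H w s)).1.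

Definition ret_nbhs : set Y := (fun w : Y => (sval (H w 1)).2) @^-1` [set s : R | 0 < s].

Lemma ret_path_continuous :
  {within [set: Y] `*` unitI R, continuous (fun z : Y * R => ret_path z.1 z.2)}.
Proof.
exact (continuous_within_comp (g := fun e : cyl_set => sval (sval e).1) H_continuous
  (continuous_compose (continuous_compose (@sval_continuous _ cyl_set) continuous_fst)
     (@sval_continuous _ (fibprod_set p)))).
Qed.

Lemma ret_nbhs_open : open ret_nbhs.
Proof.
have H1c : continuous (fun w => H w 1).
  move=> w; apply: (cvg_comp_within (F := nbhs w) (A := [set: Y] `*` unitI R)
    (k := fun v => (v, 1)) (g := fun z => H z.1 z.2) (u0 := (w, 1))).
  - exact (continuous_pair (fun v : Y => @cvg_id _ (nbhs v))
      (@continuous_cst_real Y R 1) (x := w)).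
  - by apply: nearW => v; split => //; exact: unitI1.
  - by move/subspace_continuousP: H_continuous; apply; split => //; exact: unitI1.
apply: (continuousP _).1; last exact: open_gt.
exact (continuous_compose H1c (continuous_compose (@sval_continuous _ cyl_set) continuous_snd)).
Qed.

Lemma ret_nbhs_diag : range (fdiag p) `<=` ret_nbhs.
Proof.
move=> _ [x _ <-]; rewrite /ret_nbhs /= H_diag /=; last exact: unitI1.
by rewrite clamp_id ?ltr01 //; exact: unitI1.
Qed.

Lemma retraction_ulc : fw_ULC R p.
Proof.
have P0 w : ret_path w 0 = sval w by rewrite /ret_path H_start.
have PD x s : unitI R s -> ret_path (fdiag p x) s = (x, x) by move=> Is; rewrite /ret_path H_diag.
have Pfib w s : unitI R s -> p (ret_path w s).1 = fibprod_proj p w.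
  by move=> Is; rewrite -(H_fibre w Is).
exists ret_nbhs; split; [exact: ret_nbhs_open | exact: ret_nbhs_diag |].
exists (fun w t =>
  if t <= 2^-1 then (ret_path w (2 * t)).1 else (ret_path w (2 - 2 * t)).2); split.
- have WI : ret_nbhs `*` unitI R `<=` [set: Y] `*` unitI R by move=> z [].
  apply: (reverse_concat_continuous (K1 := fun w s => (ret_path w s).1)
    (K2 := fun w s => (ret_path w s).2)) => [||w /cyl_diag_of_pos //].
    exact: continuous_subspaceW WI (continuous_within_comp ret_path_continuous continuous_fst).
  exact: continuous_subspaceW WI (continuous_within_comp ret_path_continuous continuous_snd).
- move=> w t _ /andP[t0 t1]; case: leP => tle.
    by rewrite Pfib //; apply/andP; split; lra.
  by rewrite -(fibprod_eq (sval (H w _)).1) Pfib //; apply/andP; split; lra.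
- move=> w _; rewrite mulr0 P0 ifT ?invr_ge0 ?ler0n //; split=> //.
  by rewrite ifF ?mulr1 ?subrr ?P0 // lt_geF // invf_lt1 ?ltr1n.
- move=> x t /andP[t0 t1]; case: leP => tle; rewrite PD //; apply/andP; split; lra.
Qed.
End Retraction.

Lemma lec_ulc : fw_LEC R p -> fw_ULC R p.
Proof.
move=> [cof _]; have [H [Hc Hfib H0 HD]] := cyl_retraction cof.
exact: retraction_ulc Hc Hfib H0 HD.
Qed.
End LecToUlc.

Section UlcToCofibration.
Variables (R : realType) (B X : topologicalType) (p : X -> B).
Local Notation Y := (fibprod p).
Variables (W : set Y) (G : Y -> R -> X).
Hypothesis W_open : open W.
Hypothesis G_continuous :
  {within W `*` unitI R, continuous (fun z : Y * R => G z.1 z.2)}.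
Hypothesis G_fibre : forall w t, W w -> unitI R t -> p (G w t) = fibprod_proj p w.
Hypothesis G_ends : forall w, W w -> G w 0 = (sval w).1 /\ G w 1 = (sval w).2.
Hypothesis G_diag : forall x t, unitI R t -> G (fdiag p x) t = x.
Variables (u phi0 : Y -> R).
Hypothesis u_continuous : continuous u.
Hypothesis u_diag : forall x, u (fdiag p x) = 0.
Hypothesis u_outside : forall z, ~ W z -> u z = 1.
Hypothesis u_range : forall z, 0 <= u z <= 1.
Hypothesis phi0_continuous : continuous phi0.
Hypothesis phi0_zero : forall z, phi0 z = 0 <-> range (fdiag p) z.
Hypothesis phi0_ge0 : forall z, 0 <= phi0 z.

(* How far along G the point z is deformed: 1 where u <= 1/4 and 0 where
   u >= 1/2, so that the deformation is stationary off W. *)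
Definition deform_reach (z : Y) : R := clamp (2 - 4 * u z).

(* Half the time spent deforming z: it vanishes exactly on the diagonal,
   and it is at most 1/2 only where the deformation reaches the end. *)
Definition deform_time (z : Y) : R := (phi0 z + Num.min 1 (4 * u z)) / 2.

Lemma deform_reach_continuous : continuous deform_reach.
Proof.
exact (continuous_compose (continuous_subr (continuous_cst_real 2)
  (continuous_mulr (continuous_cst_real 4) u_continuous)) clamp_continuous).
Qed.

Lemma deform_time_continuous : continuous deform_time.
Proof.
exact (continuous_mulr (continuous_addr phi0_continuous (continuous_minr
  (continuous_cst_real 1) (continuous_mulr (continuous_cst_real 4) u_continuous)))
  (continuous_cst_real 2^-1)).
Qed.

Lemma deform_time_ge0 z : 0 <= deform_time z.
Proof.
have /andP[u0 _] := u_range z.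
have m0 : 0 <= Num.min 1 (4 * u z) by rewrite le_min ler01 mulr_ge0.
by apply: divr_ge0 => //; rewrite addr_ge0.
Qed.

Lemma deform_time_zero z : deform_time z = 0 <-> range (fdiag p) z.
Proof.
split=> [|[x _ <-]]; last first.
  rewrite /deform_time u_diag mulr0 (min_idPr (@ler01 R)) addr0.
  have -> : phi0 (fdiag p x) = 0 by apply/phi0_zero; exists x.
  by rewrite mul0r.
move/eqP; rewrite mulf_eq0 invr_eq0 pnatr_eq0 orbF => /eqP e; apply/phi0_zero.
have /andP[u0 _] := u_range z; have := phi0_ge0 z.
have : 0 <= Num.min 1 (4 * u z) by rewrite le_min ler01 mulr_ge0.
lra.
Qed.

Lemma deform_reach_one z : deform_time z <= 2^-1 -> deform_reach z = 1.
Proof.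
move=> small; have /andP[u0 u1] := u_range z; have := phi0_ge0 z.
have [uq|uq] := leP (u z) 4^-1.
  by rewrite /deform_reach /clamp (min_idPl _) ?(max_idPr (@ler01 R)) //; lra.
move: small; rewrite /deform_time (min_idPl _); last lra.
move=> small phi0z_ge0; have : phi0 z = 0 by lra.
by move/phi0_zero => [x _ ex]; move: uq; rewrite -ex u_diag; lra.
Qed.

Lemma deform_reach_zero z : 2^-1 < u z -> deform_reach z = 0.
Proof.
by move=> uh; rewrite /deform_reach /clamp (min_idPr _) ?(max_idPl _) //; lra.
Qed.

Lemma W_of_reach z : deform_reach z != 0 -> W z.
Proof.
move=> reach0; apply: contrapT => /u_outside u1; move: reach0.
by rewrite deform_reach_zero ?eqxx // u1; lra.
Qed.

Lemma deform_param_in z s : unitI R (deform_reach z * clamp s).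
Proof. exact: unitI_mul (clamp_in _) (clamp_in _). Qed.

Definition deform_pair (z : Y) (s : R) : X * X :=
  if pselect (W z) then (G z (deform_reach z * clamp s), (sval z).2) else sval z.

Lemma deform_pair_mem z s : deform_pair z s \in fibprod_set p.
Proof.
rewrite /deform_pair; case: pselect => Wz; apply: mem_set; last exact: (set_mem (svalP z)).
rewrite /fibprod_set /= G_fibre //; last exact: deform_param_in.
exact (fibprod_eq z).
Qed.

Definition deform (z : Y) (s : R) : Y := exist _ (deform_pair z s) (deform_pair_mem z s).

Lemma deform0 z : deform z 0 = z.
Proof.
apply: val_inj; rewrite /= /deform_pair; case: pselect => Wz //.
rewrite clamp_id; last exact: unitI0.
by rewrite mulr0 (G_ends Wz).1 -surjective_pairing.
Qed.

Lemma deform_diag x s : deform (fdiag p x) s = fdiag p x.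
Proof.
apply: val_inj; rewrite /= /deform_pair; case: pselect => Wz //.
by rewrite G_diag //; exact: deform_param_in.
Qed.

Lemma deform_end z s : deform_reach z = 1 -> 1 <= s -> deform z s = fdiag p (sval z).2.
Proof.
move=> reach1 s1; have Wz : W z by apply: W_of_reach; rewrite reach1 oner_neq0.
apply: val_inj; rewrite /= /deform_pair; case: pselect => // ?.
by rewrite reach1 /clamp (min_idPl s1) (max_idPr (@ler01 R)) mulr1 (G_ends Wz).2.
Qed.

Lemma deform_fibre z s : fibprod_proj p (deform z s) = fibprod_proj p z.
Proof.
rewrite /fibprod_proj /= /deform_pair; case: pselect => Wz //=.
by rewrite G_fibre //; exact: deform_param_in.
Qed.

Lemma deform_clamp z s : deform z (clamp s) = deform z s.
Proof. by apply: val_inj; rewrite /= /deform_pair clamp_id //; exact: clamp_in. Qed.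

Lemma deform_continuous : continuous (fun z : Y * R => deform z.1 z.2).
Proof.
apply: continuous_into_subspace => -[z0 s0] /=.
have [Wz0|nWz0] := pselect (W z0).
  have nearW : \forall z \near (z0, s0), W z.1.
    by apply: (continuous_fst (x := (z0, s0))); exact: open_nbhs_nbhs.
  apply: (@cvg_near_eq _ _ _ _ _
    (fun z : Y * R => (G z.1 (deform_reach z.1 * clamp z.2), (sval z.1).2))).
    by apply: filterS nearW => z Wz; rewrite /deform_pair; case: pselect.
  have -> : deform_pair z0 s0 = (G z0 (deform_reach z0 * clamp s0), (sval z0).2).
    by rewrite /deform_pair; case: pselect.
  apply: (cvg_pair_pt (F := nbhs (z0, s0))).
    apply: (cvg_comp_within (F := nbhs (z0, s0)) (A := W `*` unitI R)
      (k := fun z : Y * R => (z.1, deform_reach z.1 * clamp z.2)) (g := fun z => G z.1 z.2)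
      (u0 := (z0, deform_reach z0 * clamp s0))).
    - exact (continuous_pair continuous_fst (continuous_mulr
        (continuous_compose continuous_fst deform_reach_continuous)
        (continuous_compose continuous_snd clamp_continuous)) (x := (z0, s0))).
    - by apply: filterS nearW => z Wz; split => //; exact: deform_param_in.
    - by move/subspace_continuousP: G_continuous; apply; split => //; exact: deform_param_in.
  exact (continuous_compose continuous_fst (@snd_fibprod_continuous _ _ p) (x := (z0, s0))).
(* off W, u = 1, so near z0 the reach vanishes and the deformation is trivial *)
have nearU : \forall z \near (z0, s0), 2^-1 < u z.1.
  apply: (cvgr_gt _ (continuous_compose continuous_fst u_continuous (x := (z0, s0)))) => /=.
  rewrite u_outside //; lra.
apply: (@cvg_near_eq _ _ _ _ _ (fun z : Y * R => sval z.1)).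
  apply: filterS nearU => z uz; rewrite /deform_pair; case: pselect => Wz //.
  by rewrite deform_reach_zero // mul0r (G_ends Wz).1 -surjective_pairing.
have -> : deform_pair z0 s0 = sval z0 by rewrite /deform_pair; case: pselect.
exact (continuous_compose continuous_fst (@sval_continuous _ (fibprod_set p)) (x := (z0, s0))).
Qed.

(* Strom's extension of a homotopy h of f o Delta to a homotopy of f: follow
   f along the deformation at speed 1/(2 time), then follow h from the
   diagonal point reached. *)
Section Extension.
Variables (E : topologicalType) (pE : E -> B) (f : Y -> E) (h : X -> R -> E).
Hypothesis f_continuous : continuous f.
Hypothesis f_fibre : forall y, pE (f y) = fibprod_proj p y.
Hypothesis h_continuous :
  {within [set: X] `*` unitI R, continuous (fun z : X * R => h z.1 z.2)}.
Hypothesis h_fibre : forall x t, unitI R t -> pE (h x t) = p x.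
Hypothesis h_start : forall x, h x 0 = f (fdiag p x).

Definition ext_first (z : Y * R) : E := f (deform z.1 (z.2 / (2 * deform_time z.1))).
Definition ext_second (z : Y * R) : E := h (sval z.1).2 (z.2 - 2 * deform_time z.1).

Definition extension (y : Y) (t : R) : E :=
  if t <= 2 * deform_time y then ext_first (y, t) else ext_second (y, t).

Lemma extension0 y : extension y 0 = f y.
Proof.
rewrite /extension ifT; last by rewrite mulr_ge0 ?deform_time_ge0.
by rewrite /ext_first /= mul0r deform0.
Qed.

Lemma extension_diag x t : unitI R t -> extension (fdiag p x) t = h x t.
Proof.
move=> /andP[t0 t1]; have tz : deform_time (fdiag p x) = 0 by apply/deform_time_zero; exists x.
rewrite /extension /ext_first /ext_second /= tz mulr0 subr0; case: leP => tle //.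
have t_eq0 : t = 0 by apply/eqP; rewrite eq_le tle t0.
by rewrite t_eq0 mul0r deform_diag h_start.
Qed.

Lemma extension_fibre y t : unitI R t -> pE (extension y t) = fibprod_proj p y.
Proof.
move=> /andP[t0 t1]; rewrite /extension; case: leP => tle.
  by rewrite f_fibre deform_fibre.
rewrite h_fibre; first exact: (esym (fibprod_eq y)).
by have := deform_time_ge0 y; rewrite /unitI /= => ?; apply/andP; split; lra.
Qed.

Lemma ext_switch y : 2 * deform_time y <= 1 ->
  ext_first (y, 2 * deform_time y) = ext_second (y, 2 * deform_time y).
Proof.
move=> time_small; rewrite /ext_first /ext_second /= subrr h_start.
have [tz|tpos] := eqVneq (deform_time y) 0.
  have [x _ ex] := (deform_time_zero y).1 tz.
  by rewrite tz mulr0 mul0r deform0 -ex.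
rewrite divff; last by rewrite mulf_neq0 ?pnatr_eq0.
by rewrite deform_end //; apply: deform_reach_one; lra.
Qed.

Lemma ext_first_cvg (y0 : Y) (t0 : R) :
  0 < deform_time y0 -> ext_first @ (y0, t0) --> ext_first (y0, t0).
Proof.
move=> tpos.
have k_cvg : (fun z : Y * R => (z.1, z.2 / (2 * deform_time z.1))) @ (y0, t0)
    --> (y0, t0 / (2 * deform_time y0)).
  apply: cvg_pair_pt; first exact: (continuous_fst (x := (y0, t0))).
  apply: cvgM; first exact: (continuous_snd (x := (y0, t0))).
  apply: cvgV; first by rewrite mulf_neq0 ?pnatr_eq0 // gt_eqF.
  exact (continuous_mulr (continuous_cst_real 2)
    (continuous_compose continuous_fst deform_time_continuous) (x := (y0, t0))).
exact: (cvg_comp_continuous k_cvg (continuous_compose deform_continuous f_continuous)).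
Qed.

(* At a diagonal point the deformation is stationary, so by the tube lemma
   the first leg stays uniformly close to f y0, whatever its speed. *)
Lemma ext_first_cvg_diag (y0 : Y) (t0 : R) : deform_time y0 = 0 -> ext_first @ (y0, t0) --> f y0.
Proof.
move=> tz N Nf; have [x _ ex] := (deform_time_zero y0).1 tz.
have tube := tube_const (k := fun y s => f (deform y s))
  (continuous_compose deform_continuous f_continuous)
  (fun s => congr1 f (etrans (congr1 (deform^~ s) (esym ex)) (etrans (deform_diag x s) ex))) Nf.
have near_tube := continuous_fst (x := (y0, t0)) tube.
apply: (@filterS _ (nbhs (y0, t0)) _ _ _ _ near_tube) => z zN.
rewrite /preimage /= in zN *; rewrite /ext_first -deform_clamp.
by apply: zN; exact: clamp_in.
Qed.

Lemma extension_continuous :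
  {within [set: Y] `*` unitI R, continuous (fun z : Y * R => extension z.1 z.2)}.
Proof.
have -> : (fun z : Y * R => extension z.1 z.2) =
    fun z => if z.2 <= 2 * deform_time z.1 then ext_first z else ext_second z.
  by apply: funext => -[].
apply/subspace_continuousP => -[y0 t0] [_ /= /andP[t00 t01]].
rewrite /from_subspace /=.
apply: (cvg_paste_le (a := snd) (b := fun z : Y * R => 2 * deform_time z.1)).
- exact: cvg_trans (cvg_app snd (cvg_within _)) cvg_snd.
- apply: cvg_trans (cvg_app _ (cvg_within _)) _.
  exact (continuous_mulr (continuous_cst_real 2)
    (continuous_compose continuous_fst deform_time_continuous) (x := (y0, t0))).
- move=> /= tle; rewrite ifT //.
  have [tz|tpos] := eqVneq (deform_time y0) 0; last first.
    apply: cvg_trans (cvg_app _ (cvg_within_within _ _ (y0, t0))) _.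
    by apply: ext_first_cvg; rewrite lt_def tpos deform_time_ge0.
  have t0z : t0 = 0 by apply/eqP; rewrite eq_le t00 andbT -(mulr0 2) -tz.
  rewrite {2}t0z /ext_first /= mul0r deform0.
  apply: cvg_trans (cvg_app _ (cvg_within_within _ _ (y0, t0))) _.
  exact: ext_first_cvg_diag.
- move=> /= tge; have -> : (if t0 <= 2 * deform_time y0 then ext_first (y0, t0)
      else ext_second (y0, t0)) = ext_second (y0, t0).
    case: leP => // tle; have teq : t0 = 2 * deform_time y0 by apply/eqP; rewrite eq_le tle.
    by rewrite teq ext_switch // -teq.
  apply: (cvg_comp_within_region (A := [set: X] `*` unitI R) (g := fun z => h z.1 z.2)
    (k := fun z : Y * R => ((sval z.1).2, z.2 - 2 * deform_time z.1))).
  + exact (continuous_pair (continuous_compose continuous_fst (@snd_fibprod_continuous _ _ p))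
      (continuous_subr continuous_snd (continuous_mulr (continuous_cst_real 2)
        (continuous_compose continuous_fst deform_time_continuous)))).
  + move=> [z t] [_ /= /andP[_ t1]] /= tgt; split => //; rewrite /unitI /=.
    by have := deform_time_ge0 z => ?; apply/andP; split; lra.
  + split => //; rewrite /unitI /=.
    by have := deform_time_ge0 y0 => ?; apply/andP; split; lra.
  + exact: h_continuous.
Qed.
End Extension.

Lemma diag_cofibration : fw_cofibration R p (fibprod_proj p) (fdiag p).
Proof.
split=> [||E pE _ f h fc ffib hc hfib h0]; [exact: fdiag_continuous | by [] |].
exists (extension f h); split.
- exact: extension_continuous.
- by move=> y t; apply: extension_fibre.
- by move=> y; apply: extension0.
- by move=> x t; apply: extension_diag.
Qed.
End UlcToCofibration.

Lemma fdiag_closed_embedding (B X : topologicalType) (p : X -> B) :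
  fw_hausdorff p -> closed_embedding (fdiag p).
Proof.
move=> hd; split; [exact: fdiag_continuous | exact: hd |].
exists (fun z : fibprod p => (sval z).1); split => //.
exact: continuous_subspaceT (@fst_fibprod_continuous _ _ p).
Qed.

Lemma ulc_lec (R : realType) (B X : topologicalType) (p : X -> B) :
  fw_hausdorff p -> normal_space (fibprod p) -> Gdelta (range (fdiag p)) ->
  fw_ULC R p -> fw_LEC R p.
Proof.
move=> hd nY gd [W [Wo WD [G [Gc Gfib Gends Gdiag]]]].
have [u [uc uD uW ur]] : exists u : fibprod p -> R, [/\ continuous u,
    u @` range (fdiag p) `<=` [set 0], u @` (~` W) `<=` [set 1] & range u `<=` `[0, 1]].
  apply: (urysohn_ext_itv nY hd (open_closedC Wo) _ (@ltr01 R)).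
  by apply/seteqP; split => // z [/WD Wz]; apply.
have [phi0 [phi0c phi0z phi0r]] := closed_Gdelta_zero_set R nY hd gd.
split; last exact: fdiag_closed_embedding.
apply: (diag_cofibration Wo Gc Gfib Gends Gdiag uc _ _ _ phi0c phi0z).
- by move=> x; apply: uD; exists (fdiag p x) => //; exists x.
- by move=> z nWz; apply: uW; exists z.
- by move=> z; have := ur (u z) (ex_intro2 _ _ z I erefl); rewrite /= in_itv.
- by move=> z; case/andP: (phi0r z).
Qed.

Theorem theorem4p4 (R : realType) (B X : topologicalType) (p : X -> B) :
  continuous p ->
  fw_hausdorff p ->
  perfectly_normal (fibprod p) ->
  (fw_LEC R p <-> fw_ULC R p).
Proof.
move=> pc hd [nY Gdelta_closed]; split; first exact: lec_ulc.
exact: ulc_lec hd nY (Gdelta_closed _ hd).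
Qed.
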